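(* Let $\Omega\subset\mathbb{R}^2$ be a bounded convex set with non-empty interior which has the same symmetry axes as an equilateral triangle (i.e. it is symmetric with respect to three lines through a common point forming pairwise angles $\pi/3$). Then there exist $a\in[0,1/3]$ and a map $g$ which is a composition of a rigid motion and a homothety such that $g(\Omega)\in\mathcal C_a$.
   Context: Let $T$ be the equilateral triangle with vertices $(\pm1/2,0)$ and $(0,\sqrt3/2)$; its symmetry axes are the lines $x=0$, $-x+\sqrt3 y=1/2$, $x+\sqrt3y=1/2$. For $a\in[0,1/2]$, let $\hat T_a$ be the equilateral triangle bounded by the lines $y=\frac{\sqrt3}{2}(1-a)$ and $y=\pm\sqrt3x-\sqrt3(\frac12-a)$. Let $\Omega_a=\hat T_a\cap T$, the hexagon with vertices $(\pm\frac a2,\frac{\sqrt3}{2}(1-a))$, $(\pm(\frac12-a),0)$, $(\pm\frac12(1-a),\frac{\sqrt3}{2}a)$. Let $H_a$ be the hexagon with vertices $(0,0)$, $(\pm(\frac12-\frac34a),\frac{\sqrt3}{4}a)$, $(\pm\frac14,\frac{\sqrt3}4)$, $(0,\frac{\sqrt3}{2}(1-a))$ (the midpoints of the sides of $\Omega_a$). For $a\in[0,1/2]$, $\mathcal C_a$ is the class of convex sets $\Omega$ symmetric with respect to the three symmetry axes of $T$ and satisfying $H_a\subset\overline\Omega\subset\overline{\Omega_a}$ (sets identified with their closures). *)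

From Stdlib Require Import Reals Lra.
Open Scope R_scope.

Definition pt : Type := (R * R)%type.

Definition dist (p q : pt) : R :=
  sqrt ((fst p - fst q) ^ 2 + (snd p - snd q) ^ 2).

Definition convex_set (S : pt -> Prop) : Prop :=
  forall p q t, S p -> S q -> 0 <= t <= 1 ->
    S ((1 - t) * fst p + t * fst q, (1 - t) * snd p + t * snd q).

Definition bounded_set (S : pt -> Prop) : Prop :=
  exists M, forall p, S p -> dist p (0, 0) <= M.

Definition nonempty_interior (S : pt -> Prop) : Prop :=
  exists p r, 0 < r /\ forall q, dist p q < r -> S q.

Definition closure (S : pt -> Prop) (p : pt) : Prop :=
  forall e, 0 < e -> exists q, S q /\ dist p q < e.

Definition image (g : pt -> pt) (S : pt -> Prop) (q : pt) : Prop :=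
  exists p, S p /\ q = g p.

(* reflection across the line through c with direction angle th *)
Definition refl_dir (c : pt) (th : R) (p : pt) : pt :=
  let u := fst p - fst c in let v := snd p - snd c in
  (fst c + cos (2 * th) * u + sin (2 * th) * v,
   snd c + sin (2 * th) * u - cos (2 * th) * v).

(* reflection across the line {(x,y) | a1 x + a2 y = b}, (a1,a2) <> 0 *)
Definition refl_line (a1 a2 b : R) (p : pt) : pt :=
  let k := 2 * (a1 * fst p + a2 * snd p - b) / (a1 ^ 2 + a2 ^ 2) in
  (fst p - k * a1, snd p - k * a2).

Definition symmetric_wrt (f : pt -> pt) (S : pt -> Prop) : Prop :=
  forall p, S p <-> S (f p).

Definition triangle_symmetric (S : pt -> Prop) : Prop :=
  exists (c : pt) (th : R),
    symmetric_wrt (refl_dir c th) S /\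
    symmetric_wrt (refl_dir c (th + PI / 3)) S /\
    symmetric_wrt (refl_dir c (th + 2 * PI / 3)) S.

(* symmetric w.r.t. the axes x=0, -x+sqrt3 y=1/2, x+sqrt3 y=1/2 of T *)
Definition T_symmetric (S : pt -> Prop) : Prop :=
  symmetric_wrt (refl_line 1 0 0) S /\
  symmetric_wrt (refl_line (-1) (sqrt 3) (1/2)) S /\
  symmetric_wrt (refl_line 1 (sqrt 3) (1/2)) S.

(* the triangle T with vertices (+-1/2,0), (0,sqrt3/2) *)
Definition T_set (p : pt) : Prop :=
  0 <= snd p /\ snd p <= sqrt 3 * (fst p + 1/2) /\ snd p <= - sqrt 3 * (fst p - 1/2).

Definition That (a : R) (p : pt) : Prop :=
  snd p <= sqrt 3 / 2 * (1 - a) /\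
  sqrt 3 * fst p - sqrt 3 * (1/2 - a) <= snd p /\
  - sqrt 3 * fst p - sqrt 3 * (1/2 - a) <= snd p.

Definition Omega (a : R) (p : pt) : Prop := That a p /\ T_set p.

Definition conv_hull6 (p1 p2 p3 p4 p5 p6 : pt) (q : pt) : Prop :=
  exists w1 w2 w3 w4 w5 w6 : R,
    0 <= w1 /\ 0 <= w2 /\ 0 <= w3 /\ 0 <= w4 /\ 0 <= w5 /\ 0 <= w6 /\
    w1 + w2 + w3 + w4 + w5 + w6 = 1 /\
    fst q = w1 * fst p1 + w2 * fst p2 + w3 * fst p3 + w4 * fst p4 + w5 * fst p5 + w6 * fst p6 /\
    snd q = w1 * snd p1 + w2 * snd p2 + w3 * snd p3 + w4 * snd p4 + w5 * snd p5 + w6 * snd p6.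

Definition H (a : R) : pt -> Prop :=
  conv_hull6 (0, 0)
             (1/2 - 3/4 * a, sqrt 3 / 4 * a)
             (1/4, sqrt 3 / 4)
             (0, sqrt 3 / 2 * (1 - a))
             (- (1/4), sqrt 3 / 4)
             (- (1/2 - 3/4 * a), sqrt 3 / 4 * a).

(* the class C_a (sets identified with their closures) *)
Definition class_C (a : R) (S : pt -> Prop) : Prop :=
  convex_set S /\ T_symmetric S /\
  (forall p, H a p -> closure S p) /\
  (forall p, closure S p -> closure (Omega a) p).

Definition rigid_motion (f : pt -> pt) : Prop :=
  forall p q, dist (f p) (f q) = dist p q.

Definition homothety (h : pt -> pt) : Prop :=
  exists (c : pt) (lam : R), lam <> 0 /\
    forall p, h p = (fst c + lam * (fst p - fst c), snd c + lam * (snd p - snd c)).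

Definition similarity (g : pt -> pt) : Prop :=
  exists f h, rigid_motion f /\ homothety h /\ forall p, g p = f (h p).

From Stdlib Require Import Reals Lra Psatz Nsatz List Classical
  FunctionalExtensionality PropExtensionality.
Open Scope R_scope.

(* After a rigid motion the three axes of Om are the lines through the origin
   at angles pi/2, pi/6 and 5pi/6; reflecting in the x-axis if necessary, the
   infimum m and the supremum M of the ordinate on Om satisfy -m <= M.  The
   reflections in the axes turn the support line y = m into the three sides of
   an equilateral triangle containing Om, and y = M into the sides of an
   inverted one; the three rotated ordinates sum to zero, whence M <= -2m.
   Scaling by -2 sqrt 3 m maps the first triangle onto T, the second onto
   \hat T_a with a = (2 + M/m)/3 in [0, 1/3], and the six extremal points of
   Om on its axes onto the vertices of H_a. *)

Lemma abs_fst_le_dist p q : Rabs (fst p - fst q) <= dist p q.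
Proof.
  unfold dist. rewrite <- sqrt_Rsqr_abs. apply sqrt_le_1_alt.
  unfold Rsqr. pose proof (pow2_ge_0 (snd p - snd q)). simpl in *. lra.
Qed.

Lemma abs_snd_le_dist p q : Rabs (snd p - snd q) <= dist p q.
Proof.
  unfold dist. rewrite <- sqrt_Rsqr_abs. apply sqrt_le_1_alt.
  unfold Rsqr. pose proof (pow2_ge_0 (fst p - fst q)). simpl in *. lra.
Qed.

Lemma dist_le_abs_sum p q : dist p q <= Rabs (fst p - fst q) + Rabs (snd p - snd q).
Proof.
  pose proof (Rabs_pos (fst p - fst q)); pose proof (Rabs_pos (snd p - snd q)).
  unfold dist. rewrite <- (sqrt_square (Rabs (fst p - fst q) + Rabs (snd p - snd q))) by lra.
  apply sqrt_le_1_alt.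
  rewrite <- (pow2_abs (fst p - fst q)), <- (pow2_abs (snd p - snd q)). nra.
Qed.

Lemma dist_diag p : dist p p = 0.
Proof.
  unfold dist. replace ((fst p - fst p) ^ 2 + (snd p - snd p) ^ 2) with 0 by ring.
  apply sqrt_0.
Qed.

Lemma Rabs_sub_le_add x y : Rabs (x - y) <= Rabs x + Rabs y.
Proof. rewrite <- (Rabs_Ropp y). apply Rabs_triang. Qed.

Lemma subset_closure S p : S p -> closure S p.
Proof. intros Hp e He. exists p. rewrite dist_diag. auto. Qed.

Lemma closure_invariant S f :
  (forall q, S q -> S (f q)) -> (forall p q, dist (f p) (f q) = dist p q) ->
  forall p, closure S p -> closure S (f p).
Proof.
  intros Hf Hiso p Hp e He. destruct (Hp e He) as [q [Hq D]].
  exists (f q). rewrite Hiso. auto.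
Qed.

Lemma closure_preimage S F k p :
  0 < k -> (forall p q, dist (F p) (F q) = k * dist p q) ->
  (forall p, exists q, F q = p) ->
  closure S (F p) -> closure (fun q => S (F q)) p.
Proof.
  intros Hk Hdist Hsurj Hp e He.
  destruct (Hp (k * e)) as [q' [Hq' D]]; [nra|].
  destruct (Hsurj q') as [q <-].
  exists q. split; [exact Hq'|]. rewrite Hdist in D. nra.
Qed.

Lemma closure_halfplane S al be ga :
  (forall q, S q -> al * fst q + be * snd q <= ga) ->
  forall p, closure S p -> al * fst p + be * snd p <= ga.
Proof.
  intros HS p Hp. apply Rnot_lt_le. intro Hgt.
  set (d := al * fst p + be * snd p - ga).
  set (k := Rabs al + Rabs be + 1).
  assert (Hk : 0 < k) by (unfold k; pose proof (Rabs_pos al); pose proof (Rabs_pos be); lra).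
  destruct (Hp (d / k)) as [q [Hq D]]; [apply Rdiv_lt_0_compat; unfold d; lra|].
  specialize (HS q Hq).
  assert (Hx : al * (fst p - fst q) <= Rabs al * dist p q).
  { eapply Rle_trans; [apply Rle_abs|]. rewrite Rabs_mult.
    apply Rmult_le_compat_l; [apply Rabs_pos | apply abs_fst_le_dist]. }
  assert (Hy : be * (snd p - snd q) <= Rabs be * dist p q).
  { eapply Rle_trans; [apply Rle_abs|]. rewrite Rabs_mult.
    apply Rmult_le_compat_l; [apply Rabs_pos | apply abs_snd_le_dist]. }
  assert (Hkd : k * dist p q < d).
  { apply (Rmult_lt_compat_l k) in D; [|exact Hk].
    replace (k * (d / k)) with d in D by (field; lra). exact D. }
  assert (0 <= dist p q) by apply sqrt_pos.
  unfold k, d in *. nra.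
Qed.

Lemma closure_sub_Omega S a :
  (forall q, S q -> Omega a q) -> forall p, closure S p -> Omega a p.
Proof.
  intros HS p Hp.
  assert (half : forall al be ga,
    (forall q, Omega a q -> al * fst q + be * snd q <= ga) -> al * fst p + be * snd p <= ga).
  { intros al be ga H. apply (closure_halfplane S); auto. }
  pose proof (half 0 1 (sqrt 3 / 2 * (1 - a)) ltac:(intros q [[? [? ?]] [? [? ?]]]; lra)).
  pose proof (half (sqrt 3) (-1) (sqrt 3 * (1/2 - a)) ltac:(intros q [[? [? ?]] [? [? ?]]]; lra)).
  pose proof (half (- sqrt 3) (-1) (sqrt 3 * (1/2 - a)) ltac:(intros q [[? [? ?]] [? [? ?]]]; lra)).
  pose proof (half 0 (-1) 0 ltac:(intros q [[? [? ?]] [? [? ?]]]; lra)).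
  pose proof (half (- sqrt 3) 1 (sqrt 3 / 2) ltac:(intros q [[? [? ?]] [? [? ?]]]; lra)).
  pose proof (half (sqrt 3) 1 (sqrt 3 / 2) ltac:(intros q [[? [? ?]] [? [? ?]]]; lra)).
  unfold Omega, That, T_set. repeat split; lra.
Qed.

Definition lerp (t : R) (p q : pt) : pt :=
  ((1 - t) * fst p + t * fst q, (1 - t) * snd p + t * snd q).

Lemma convex_preimage S F :
  (forall t p q, F (lerp t p q) = lerp t (F p) (F q)) ->
  convex_set S -> convex_set (fun q => S (F q)).
Proof.
  intros HF HS p q t Hp Hq Ht. change (S (F (lerp t p q))).
  rewrite HF. exact (HS _ _ t Hp Hq Ht).
Qed.

Lemma closure_convex S : convex_set S -> convex_set (closure S).
Proof.
  intros HS p q t Hp Hq Ht e He.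
  destruct (Hp (e/4)) as [p' [Hp' Dp]]; [lra|].
  destruct (Hq (e/4)) as [q' [Hq' Dq]]; [lra|].
  exists (lerp t p' q'). split; [exact (HS _ _ t Hp' Hq' Ht)|].
  assert (Hmix : forall u u' v v', Rabs (u - u') <= e/4 -> Rabs (v - v') <= e/4 ->
            Rabs ((1 - t) * u + t * v - ((1 - t) * u' + t * v')) <= e/4).
  { intros u u' v v' Hu Hv.
    replace ((1 - t) * u + t * v - ((1 - t) * u' + t * v'))
      with ((1 - t) * (u - u') + t * (v - v')) by ring.
    eapply Rle_trans; [apply Rabs_triang|]. rewrite !Rabs_mult.
    rewrite (Rabs_right (1 - t)), (Rabs_right t) by lra. nra. }
  pose proof (abs_fst_le_dist p p'); pose proof (abs_snd_le_dist p p').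
  pose proof (abs_fst_le_dist q q'); pose proof (abs_snd_le_dist q q').
  eapply Rle_lt_trans; [apply dist_le_abs_sum|]. unfold lerp; simpl.
  pose proof (Hmix (fst p) (fst p') (fst q) (fst q')).
  pose proof (Hmix (snd p) (snd p') (snd q) (snd q')).
  lra.
Qed.

Fixpoint total_weight (l : list (R * pt)) : R :=
  match l with nil => 0 | (w, _) :: t => w + total_weight t end.
Fixpoint weighted_x (l : list (R * pt)) : R :=
  match l with nil => 0 | (w, p) :: t => w * fst p + weighted_x t end.
Fixpoint weighted_y (l : list (R * pt)) : R :=
  match l with nil => 0 | (w, p) :: t => w * snd p + weighted_y t end.

Definition weighted_in (S : pt -> Prop) (l : list (R * pt)) : Prop :=
  Forall (fun wp => 0 <= fst wp /\ S (snd wp)) l.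

Lemma total_weight_nonneg S l : weighted_in S l -> 0 <= total_weight l.
Proof. induction 1 as [|[w p] t [Hw _] _ IH]; simpl in *; lra. Qed.

Lemma total_weight_zero S l : weighted_in S l -> total_weight l = 0 ->
  weighted_x l = 0 /\ weighted_y l = 0.
Proof.
  induction 1 as [|[w p] t [Hw _] Ht IH]; simpl in *; [auto|]. intro E.
  pose proof (total_weight_nonneg S t Ht).
  assert (w = 0) by lra. subst w. destruct IH as [-> ->]; [lra|]. split; ring.
Qed.

Lemma convex_barycenter S l : convex_set S -> weighted_in S l -> 0 < total_weight l ->
  S (weighted_x l / total_weight l, weighted_y l / total_weight l).
Proof.
  intros HS. induction 1 as [|[w p] t [Hw Hp] Ht IH]; simpl in *; [lra|]. intro Hpos.
  pose proof (total_weight_nonneg S t Ht) as Ht0.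
  destruct (Req_dec (total_weight t) 0) as [E|E].
  - destruct (total_weight_zero S t Ht E) as [-> ->]. rewrite E.
    replace (w * fst p + 0) with (fst p * (w + 0)) by ring.
    replace (w * snd p + 0) with (snd p * (w + 0)) by ring.
    unfold Rdiv. rewrite !Rmult_assoc, !Rinv_r, !Rmult_1_r by lra.
    destruct p; exact Hp.
  - set (W := w + total_weight t). assert (HW : 0 < W) by (unfold W; lra).
    assert (Ht' : 0 <= w / W <= 1).
    { split; [apply Rmult_le_pos; [lra | left; apply Rinv_0_lt_compat; lra]|].
      apply Rmult_le_reg_r with W; [exact HW|]. unfold Rdiv.
      rewrite Rmult_assoc, Rinv_l, Rmult_1_r by lra. unfold W; lra. }
    pose proof (HS _ _ (w / W) (IH ltac:(lra)) Hp Ht') as Hc.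
    match type of Hc with S ?q => replace (_, _) with q end; [exact Hc|].
    f_equal; unfold W; simpl; field; lra.
Qed.

Lemma conv_hull6_sub S p1 p2 p3 p4 p5 p6 :
  convex_set S -> S p1 -> S p2 -> S p3 -> S p4 -> S p5 -> S p6 ->
  forall q, conv_hull6 p1 p2 p3 p4 p5 p6 q -> S q.
Proof.
  intros HS H1 H2 H3 H4 H5 H6 q
    (w1 & w2 & w3 & w4 & w5 & w6 & h1 & h2 & h3 & h4 & h5 & h6 & hw & hx & hy).
  set (l := (w1, p1) :: (w2, p2) :: (w3, p3) :: (w4, p4) :: (w5, p5) :: (w6, p6) :: nil).
  assert (Hl : weighted_in S l) by
    (repeat (apply Forall_cons; [split; assumption|]); apply Forall_nil).
  assert (Hw : total_weight l = 1) by (simpl; lra).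
  replace q with (weighted_x l / total_weight l, weighted_y l / total_weight l).
  - apply convex_barycenter; [exact HS | exact Hl | lra].
  - rewrite Hw. unfold Rdiv. rewrite Rinv_1, !Rmult_1_r.
    destruct q as [qx qy]. simpl in *. f_equal; lra.
Qed.

Lemma symmetric_wrt_conj S F f g :
  (forall p, F (f p) = g (F p)) -> symmetric_wrt g S ->
  symmetric_wrt f (fun q => S (F q)).
Proof. intros HF Hg p. rewrite HF. apply Hg. Qed.

(* The reflection in the line through the origin at angle alpha, when
   (A, B) = (cos 2alpha, sin 2alpha). *)
Definition refl_origin (A B : R) (q : pt) : pt :=
  (A * fst q + B * snd q, B * fst q - A * snd q).

(* Axes at angles pi/2, pi/6 and 5pi/6: those of the equilateral triangle
   centred at the origin with a vertex on the positive y-axis. *)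
Definition std_symmetric (S : pt -> Prop) : Prop :=
  symmetric_wrt (refl_origin (-1) 0) S /\
  symmetric_wrt (refl_origin (1/2) (sqrt 3 / 2)) S /\
  symmetric_wrt (refl_origin (1/2) (- (sqrt 3 / 2))) S.

Definition flip_y (q : pt) : pt := (fst q, - snd q).

Lemma sqrt3_sqr : sqrt 3 * sqrt 3 = 3.
Proof. apply sqrt_sqrt. lra. Qed.

Lemma sqrt3_pos : 0 < sqrt 3.
Proof. apply sqrt_lt_R0. lra. Qed.

Lemma refl_origin_isometry A B : A ^ 2 + B ^ 2 = 1 ->
  forall p q, dist (refl_origin A B p) (refl_origin A B q) = dist p q.
Proof.
  intros HAB p q. unfold dist, refl_origin; simpl. f_equal.
  simpl in HAB. nsatz.
Qed.

Lemma flip_y_involutive q : flip_y (flip_y q) = q.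
Proof. destruct q as [x y]. unfold flip_y; simpl. now rewrite Ropp_involutive. Qed.

Lemma std_symmetric_flip S : std_symmetric S -> std_symmetric (fun q => S (flip_y q)).
Proof.
  assert (conj_flip : forall A B, symmetric_wrt (refl_origin A (- B)) S ->
            symmetric_wrt (refl_origin A B) (fun q => S (flip_y q))).
  { intros A B. apply symmetric_wrt_conj. intro p.
    unfold flip_y, refl_origin; simpl. f_equal; ring. }
  intros (H1 & H2 & H3). split; [|split]; apply conj_flip.
  - now rewrite Ropp_0.
  - exact H3.
  - now rewrite Ropp_involutive.
Qed.

Definition y_extent (S : pt -> Prop) (m M : R) : Prop :=
  (forall p, S p -> m <= snd p <= M) /\
  (forall e, 0 < e -> exists p, S p /\ snd p < m + e) /\
  (forall e, 0 < e -> exists p, S p /\ M - e < snd p).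

Lemma y_extent_flip S m M : y_extent S m M -> y_extent (fun q => S (flip_y q)) (- M) (- m).
Proof.
  intros (Hb & Hinf & Hsup). split; [|split].
  - intros p Hp. apply Hb in Hp. simpl in Hp. lra.
  - intros e He. destruct (Hsup e He) as [p [Hp Hy]].
    exists (flip_y p). rewrite flip_y_involutive. simpl. split; [exact Hp | lra].
  - intros e He. destruct (Hinf e He) as [p [Hp Hy]].
    exists (flip_y p). rewrite flip_y_involutive. simpl. split; [exact Hp | lra].
Qed.

Lemma sup_exists (S : pt -> Prop) (f : pt -> R) :
  (exists p, S p) -> (exists K, forall p, S p -> f p <= K) ->
  exists M, (forall p, S p -> f p <= M) /\
            (forall e, 0 < e -> exists p, S p /\ M - e < f p).
Proof.
  intros [p0 Hp0] [K HK].
  destruct (completeness (fun y => exists p, S p /\ y = f p)) as [M [Hub Hlub]].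
  - exists K. intros y [p [Hp ->]]. auto.
  - exists (f p0), p0. auto.
  - exists M. split.
    + intros p Hp. apply Hub. eauto.
    + intros e He. apply NNPP. intro Hnone.
      assert (Hle : M <= M - e).
      { apply Hlub. intros y [p [Hp ->]]. apply Rnot_lt_le. intro Hy.
        apply Hnone. eauto. }
      lra.
Qed.

Lemma y_extent_exists S : bounded_set S -> nonempty_interior S ->
  exists m M, m < M /\ y_extent S m M.
Proof.
  intros [B HB] [o [r [Hr Hball]]].
  set (o' := (fst o, snd o + r / 2)).
  assert (Ho : S o) by (apply Hball; rewrite dist_diag; exact Hr).
  assert (Ho' : S o').
  { apply Hball. unfold dist, o'. cbn [fst snd].
    replace ((fst o - fst o) ^ 2 + (snd o - (snd o + r / 2)) ^ 2) with ((r / 2) ^ 2) by ring.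
    rewrite sqrt_pow2; lra. }
  assert (Hy : forall p, S p -> Rabs (snd p) <= B).
  { intros p Hp. pose proof (abs_snd_le_dist p (0, 0)) as D. simpl in D.
    rewrite Rminus_0_r in D. specialize (HB p Hp). lra. }
  destruct (sup_exists S snd) as [M [HM HMa]].
  { eauto. }
  { exists B. intros p Hp. specialize (Hy p Hp). pose proof (Rle_abs (snd p)). lra. }
  destruct (sup_exists S (fun p => - snd p)) as [m' [Hm' Hm'a]].
  { eauto. }
  { exists B. intros p Hp. specialize (Hy p Hp). pose proof (Rle_abs (- snd p)).
    rewrite Rabs_Ropp in *. lra. }
  exists (- m'), M. split; [|split; [|split]].
  - pose proof (Hm' o Ho). pose proof (HM o' Ho'). unfold o' in *; simpl in *. lra.
  - intros p Hp. split; [pose proof (Hm' p Hp) | pose proof (HM p Hp)]; lra.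
  - intros e He. destruct (Hm'a e He) as [p [Hp Hlt]]. exists p. split; [exact Hp | lra].
  - exact HMa.
Qed.

(* [nsatz] treats [/ 2], [/ 3], ... as ring variables, so their defining
   equations are supplied together with [sqrt 3 * sqrt 3 = 3]. *)
Ltac sqrt3_nsatz :=
  unfold Rdiv; pose proof sqrt3_sqr;
  assert (2 * / 2 = 1) by field; assert (3 * / 3 = 1) by field;
  assert (4 * / 4 = 1) by field; assert (6 * / 6 = 1) by field;
  nsatz.

Definition rescale (k c : R) (q : pt) : pt := (k * fst q, k * (snd q - c)).

Lemma rescale_lerp k c t p q :
  rescale k c (lerp t p q) = lerp t (rescale k c p) (rescale k c q).
Proof. unfold rescale, lerp; simpl; f_equal; ring. Qed.

Lemma rescale_dist k c : 0 < k ->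
  forall p q, dist (rescale k c p) (rescale k c q) = k * dist p q.
Proof.
  intros Hk p q. unfold dist, rescale; cbn [fst snd].
  replace ((k * fst p - k * fst q) ^ 2 + (k * (snd p - c) - k * (snd q - c)) ^ 2)
    with (k ^ 2 * ((fst p - fst q) ^ 2 + (snd p - snd q) ^ 2)) by ring.
  rewrite sqrt_mult_alt, sqrt_pow2; [reflexivity | lra | apply pow2_ge_0].
Qed.

Lemma rescale_surjective k c : 0 < k -> forall p, exists q, rescale k c q = p.
Proof.
  intros Hk [x y]. exists (x / k, y / k + c).
  unfold rescale; simpl. f_equal; field; lra.
Qed.

Lemma conv_hull6_rescale k c p1 p2 p3 p4 p5 p6 q :
  conv_hull6 p1 p2 p3 p4 p5 p6 q ->
  conv_hull6 (rescale k c p1) (rescale k c p2) (rescale k c p3)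
             (rescale k c p4) (rescale k c p5) (rescale k c p6) (rescale k c q).
Proof.
  intros (w1 & w2 & w3 & w4 & w5 & w6 & h1 & h2 & h3 & h4 & h5 & h6 & hw & hx & hy).
  exists w1, w2, w3, w4, w5, w6. do 7 (split; [assumption|]).
  unfold rescale; simpl. rewrite hx, hy. split; [ring | nsatz].
Qed.

Lemma rescale_refl_line k q :
  rescale k (sqrt 3 / 6) (refl_line 1 0 0 q)
    = refl_origin (-1) 0 (rescale k (sqrt 3 / 6) q) /\
  rescale k (sqrt 3 / 6) (refl_line (-1) (sqrt 3) (1/2) q)
    = refl_origin (1/2) (sqrt 3 / 2) (rescale k (sqrt 3 / 6) q) /\
  rescale k (sqrt 3 / 6) (refl_line 1 (sqrt 3) (1/2) q)
    = refl_origin (1/2) (- (sqrt 3 / 2)) (rescale k (sqrt 3 / 6) q).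
Proof.
  assert (E1 : (-1) ^ 2 + sqrt 3 ^ 2 = 4) by (simpl; rewrite !Rmult_1_r, sqrt3_sqr; ring).
  assert (E2 : 1 ^ 2 + sqrt 3 ^ 2 = 4) by (simpl; rewrite !Rmult_1_r, sqrt3_sqr; ring).
  unfold rescale, refl_line, refl_origin; cbn [fst snd].
  rewrite E1, E2.
  split; [|split]; f_equal; [field | field | sqrt3_nsatz ..].
Qed.

Section StandardPosition.

Variables (S : pt -> Prop) (m M : R).
Hypotheses (S_convex : convex_set S) (S_sym : std_symmetric S)
  (S_extent : y_extent S m M) (m_lt_M : m < M).

Lemma std_support_bounds p : S p ->
  m <= snd p <= M /\
  m <= sqrt 3 / 2 * fst p - 1/2 * snd p <= M /\
  m <= - (sqrt 3 / 2) * fst p - 1/2 * snd p <= M.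
Proof.
  destruct S_extent as [Hb _]. destruct S_sym as (_ & H2 & H3).
  intro Hp. split; [|split].
  - exact (Hb p Hp).
  - exact (Hb _ (proj1 (H2 p) Hp)).
  - exact (Hb _ (proj1 (H3 p) Hp)).
Qed.

(* The three ordinates bounded in [std_support_bounds] sum to zero. *)
Lemma sup_le_twice_neg_inf : M <= -2 * m.
Proof.
  destruct S_extent as (_ & _ & Hsup). apply Rnot_lt_le. intro HM.
  destruct (Hsup (M + 2 * m)) as [p [Hp Hy]]; [lra|].
  pose proof (std_support_bounds p Hp). lra.
Qed.

Lemma inf_neg : m < 0.
Proof. pose proof sup_le_twice_neg_inf. lra. Qed.

(* The midpoint of p and its mirror image in the y-axis lies on the y-axis. *)
Lemma closure_on_axis y0 :
  (forall e, 0 < e -> exists p, S p /\ Rabs (snd p - y0) < e) -> closure S (0, y0).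
Proof.
  intros Happ e He. destruct (Happ e He) as [p [Hp Hy]].
  exists (lerp (1/2) p (refl_origin (-1) 0 p)). split.
  - apply S_convex; [exact Hp | exact (proj1 (proj1 S_sym p) Hp) | lra].
  - eapply Rle_lt_trans; [apply dist_le_abs_sum|].
    unfold lerp, refl_origin; cbn [fst snd].
    replace (0 - ((1 - 1/2) * fst p + 1/2 * (-1 * fst p + 0 * snd p))) with 0 by field.
    replace (y0 - ((1 - 1/2) * snd p + 1/2 * (0 * fst p - -1 * snd p)))
      with (- (snd p - y0)) by field.
    rewrite Rabs_R0, Rabs_Ropp. lra.
Qed.

Lemma closure_bottom : closure S (0, m).
Proof.
  destruct S_extent as (Hb & Hinf & _). apply closure_on_axis.
  intros e He. destruct (Hinf e He) as [p [Hp Hy]]. exists p. split; [exact Hp|].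
  pose proof (Hb p Hp). rewrite Rabs_right; lra.
Qed.

Lemma closure_top : closure S (0, M).
Proof.
  destruct S_extent as (Hb & _ & Hsup). apply closure_on_axis.
  intros e He. destruct (Hsup e He) as [p [Hp Hy]]. exists p. split; [exact Hp|].
  pose proof (Hb p Hp). rewrite Rabs_left1; lra.
Qed.

Definition rescaled (q : pt) : Prop := S (rescale (-2 * sqrt 3 * m) (sqrt 3 / 6) q).

Lemma rescaled_convex : convex_set rescaled.
Proof. apply (convex_preimage S (rescale _ _)); [apply rescale_lerp | exact S_convex]. Qed.

Lemma rescaled_T_symmetric : T_symmetric rescaled.
Proof.
  destruct S_sym as (H1 & H2 & H3). split; [|split].
  - apply (symmetric_wrt_conj _ _ _ _ (fun p => proj1 (rescale_refl_line _ p)) H1).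
  - apply (symmetric_wrt_conj _ _ _ _ (fun p => proj1 (proj2 (rescale_refl_line _ p))) H2).
  - apply (symmetric_wrt_conj _ _ _ _ (fun p => proj2 (proj2 (rescale_refl_line _ p))) H3).
Qed.

Lemma rescaled_sub_Omega a : M = - m * (2 - 3 * a) -> forall q, rescaled q -> Omega a q.
Proof.
  intros HM [x y] Hq. pose proof inf_neg as Hm. pose proof sqrt3_pos as Hs.
  destruct (std_support_bounds _ Hq) as (B1 & B2 & B3).
  unfold rescale in B1, B2, B3; cbn [fst snd] in B1, B2, B3.
  set (X := -2 * sqrt 3 * m * x) in *. set (Y := -2 * sqrt 3 * m * (y - sqrt 3 / 6)) in *.
  (* Each inequality of [Omega a] is one of the six bounds on (X, Y) divided
     by the positive factor -2 sqrt 3 m or - sqrt 3 m. *)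
  assert (E1 : Y - m = -2 * sqrt 3 * m * y) by (unfold Y; sqrt3_nsatz).
  assert (E2 : sqrt 3 / 2 * X - 1/2 * Y - m = - sqrt 3 * m * (sqrt 3 * x - y + sqrt 3 / 2))
    by (unfold X, Y; sqrt3_nsatz).
  assert (E3 : - (sqrt 3 / 2) * X - 1/2 * Y - m = - sqrt 3 * m * (- sqrt 3 * x - y + sqrt 3 / 2))
    by (unfold X, Y; sqrt3_nsatz).
  assert (E4 : M - Y = -2 * sqrt 3 * m * (sqrt 3 / 2 * (1 - a) - y))
    by (rewrite HM; unfold Y; sqrt3_nsatz).
  assert (E5 : M - (sqrt 3 / 2 * X - 1/2 * Y)
               = - sqrt 3 * m * (y - sqrt 3 * x + sqrt 3 * (1/2 - a)))
    by (rewrite HM; unfold X, Y; sqrt3_nsatz).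
  assert (E6 : M - (- (sqrt 3 / 2) * X - 1/2 * Y)
               = - sqrt 3 * m * (y + sqrt 3 * x + sqrt 3 * (1/2 - a)))
    by (rewrite HM; unfold X, Y; sqrt3_nsatz).
  assert (Hk : 0 < - sqrt 3 * m) by nra.
  unfold Omega, That, T_set; cbn [fst snd]. repeat split; nra.
Qed.

(* The vertices of [H a] go to the points where the axes meet the support
   lines y = m, y = M and their images under the reflections. *)
Lemma rescale_H_vertices a : M = - m * (2 - 3 * a) ->
  let r := rescale (-2 * sqrt 3 * m) (sqrt 3 / 6) in
  r (0, 0) = (0, m) /\
  r (1/2 - 3/4 * a, sqrt 3 / 4 * a) = refl_origin (1/2) (sqrt 3 / 2) (0, M) /\
  r (1/4, sqrt 3 / 4) = refl_origin (1/2) (- (sqrt 3 / 2)) (0, m) /\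
  r (0, sqrt 3 / 2 * (1 - a)) = (0, M) /\
  r (- (1/4), sqrt 3 / 4) = refl_origin (1/2) (sqrt 3 / 2) (0, m) /\
  r (- (1/2 - 3/4 * a), sqrt 3 / 4 * a) = refl_origin (1/2) (- (sqrt 3 / 2)) (0, M).
Proof.
  intros HM r. unfold r, rescale, refl_origin; cbn [fst snd]. rewrite HM.
  repeat split; f_equal; sqrt3_nsatz.
Qed.

Lemma H_sub_closure_rescaled a : M = - m * (2 - 3 * a) ->
  forall p, H a p -> closure rescaled p.
Proof.
  intros HM p Hp. pose proof inf_neg as Hm. pose proof sqrt3_pos as Hs.
  assert (Hk : 0 < -2 * sqrt 3 * m) by nra.
  apply (closure_preimage S (rescale _ (sqrt 3 / 6)) _ p Hk);
    [apply rescale_dist, Hk | apply rescale_surjective, Hk |].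
  destruct S_sym as (_ & H2 & H3).
  assert (Hunit : forall B, B * B = 3 / 4 -> (1/2) ^ 2 + B ^ 2 = 1)
    by (intros B HB; replace (B ^ 2) with (B * B) by ring; rewrite HB; field).
  assert (C2 : forall q, closure S q -> closure S (refl_origin (1/2) (sqrt 3 / 2) q)).
  { apply closure_invariant; [intros q Hq; exact (proj1 (H2 q) Hq)|].
    apply refl_origin_isometry, Hunit. sqrt3_nsatz. }
  assert (C3 : forall q, closure S q -> closure S (refl_origin (1/2) (- (sqrt 3 / 2)) q)).
  { apply closure_invariant; [intros q Hq; exact (proj1 (H3 q) Hq)|].
    apply refl_origin_isometry, Hunit. sqrt3_nsatz. }
  pose proof closure_bottom as Cm. pose proof closure_top as CM.
  unfold H in Hp. apply (conv_hull6_rescale (-2 * sqrt 3 * m) (sqrt 3 / 6)) in Hp.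
  destruct (rescale_H_vertices a HM) as (V1 & V2 & V3 & V4 & V5 & V6).
  rewrite V1, V2, V3, V4, V5, V6 in Hp.
  revert Hp. apply conv_hull6_sub; auto. apply closure_convex, S_convex.
Qed.

Lemma hexagon_parameter_bounds : -m <= M -> 0 <= (2 + M / m) / 3 <= 1/3.
Proof.
  intro HmM. pose proof inf_neg. pose proof sup_le_twice_neg_inf.
  assert (E : M = M / m * m) by (field; lra).
  split; nra.
Qed.

Lemma std_position_class_C : -m <= M ->
  exists a mu, 0 < mu /\ 0 <= a <= 1/3 /\
    class_C a (fun q => S (rescale mu (sqrt 3 / 6) q)).
Proof.
  intro HmM. pose proof inf_neg as Hm. pose proof sqrt3_pos.
  set (a := (2 + M / m) / 3).
  assert (HM : M = - m * (2 - 3 * a)) by (unfold a; field; lra).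
  exists a, (-2 * sqrt 3 * m). split; [nra|]. split; [apply hexagon_parameter_bounds, HmM|].
  split; [exact rescaled_convex|]. split; [exact rescaled_T_symmetric|]. split.
  - exact (H_sub_closure_rescaled a HM).
  - intros p Hp. apply subset_closure.
    exact (closure_sub_Omega _ a (rescaled_sub_Omega a HM) p Hp).
Qed.

End StandardPosition.

Lemma bounded_preimage S F :
  (forall p q, dist (F p) (F q) = dist p q) ->
  bounded_set S -> bounded_set (fun q => S (F q)).
Proof.
  intros Hiso [B HB]. set (o := F (0, 0)).
  exists (2 * B + Rabs (fst o) + Rabs (snd o)). intros q Hq.
  rewrite <- Hiso. fold o. specialize (HB _ Hq).
  pose proof (abs_fst_le_dist (F q) (0, 0)); pose proof (abs_snd_le_dist (F q) (0, 0)).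
  cbn [fst snd] in *. rewrite !Rminus_0_r in *.
  pose proof (Rabs_sub_le_add (fst (F q)) (fst o)).
  pose proof (Rabs_sub_le_add (snd (F q)) (snd o)).
  pose proof (dist_le_abs_sum (F q) o). lra.
Qed.

Lemma interior_preimage S F :
  (forall p q, dist (F p) (F q) = dist p q) -> (forall p, exists q, F q = p) ->
  nonempty_interior S -> nonempty_interior (fun q => S (F q)).
Proof.
  intros Hiso Hsurj [o [r [Hr Hball]]]. destruct (Hsurj o) as [q0 <-].
  exists q0, r. split; [exact Hr|]. intros q Hq. apply Hball. rewrite Hiso. exact Hq.
Qed.

(* A rotation by [- phi] moving the origin to [c], preceded by the reflection
   [flip_y] when [e = -1]. *)
Definition frame_map (c : pt) (phi e : R) (q : pt) : pt :=
  (fst c + cos phi * fst q + e * sin phi * snd q,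
   snd c - sin phi * fst q + e * cos phi * snd q).

Lemma cos_sin_sqr phi : cos phi * cos phi + sin phi * sin phi = 1.
Proof. pose proof (sin2_cos2 phi). unfold Rsqr in *. lra. Qed.

Lemma frame_map_lerp c phi e t p q :
  frame_map c phi e (lerp t p q) = lerp t (frame_map c phi e p) (frame_map c phi e q).
Proof. unfold frame_map, lerp; cbn [fst snd]; f_equal; ring. Qed.

Lemma frame_map_isometry c phi e : e * e = 1 ->
  forall p q, dist (frame_map c phi e p) (frame_map c phi e q) = dist p q.
Proof.
  intros He p q. unfold dist, frame_map; cbn [fst snd]. f_equal.
  transitivity ((cos phi * cos phi + sin phi * sin phi) * (fst p - fst q) ^ 2
                + e * e * (cos phi * cos phi + sin phi * sin phi) * (snd p - snd q) ^ 2);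
    [ring | rewrite He, cos_sin_sqr; ring].
Qed.

Lemma frame_map_surjective c phi e : e * e = 1 -> forall p, exists q, frame_map c phi e q = p.
Proof.
  intros He [x y]. pose proof (cos_sin_sqr phi).
  exists (cos phi * (x - fst c) - sin phi * (y - snd c),
          e * (sin phi * (x - fst c) + cos phi * (y - snd c))).
  unfold frame_map; cbn [fst snd]. f_equal; nsatz.
Qed.

Lemma frame_map_flip c phi q : frame_map c phi (-1) q = frame_map c phi 1 (flip_y q).
Proof. unfold frame_map, flip_y; cbn [fst snd]. f_equal; ring. Qed.

Lemma frame_map_refl c phi al q :
  frame_map c phi 1 (refl_origin (cos al) (sin al) q)
  = refl_dir c (al / 2 - phi) (frame_map c phi 1 q).
Proof.
  pose proof (cos_sin_sqr phi).
  unfold frame_map, refl_origin, refl_dir; cbn [fst snd].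
  replace (2 * (al / 2 - phi)) with (al - 2 * phi) by field.
  rewrite cos_minus, sin_minus, cos_2a, sin_2a. f_equal; nsatz.
Qed.

Lemma cos_sin_5PI3 : cos (5 * PI / 3) = 1/2 /\ sin (5 * PI / 3) = - (sqrt 3 / 2).
Proof.
  replace (5 * PI / 3) with (2 * PI - PI / 3) by field.
  rewrite cos_minus, sin_minus, cos_2PI, sin_2PI, cos_PI3, sin_PI3. split; ring.
Qed.

Lemma triangle_symmetric_frame Om : triangle_symmetric Om ->
  exists c phi, std_symmetric (fun q => Om (frame_map c phi 1 q)).
Proof.
  intros (c & th & H1 & H2 & H3). exists c, (PI / 6 - th).
  assert (axis : forall al th', th' = al / 2 - (PI / 6 - th) ->
            symmetric_wrt (refl_dir c th') Om ->
            symmetric_wrt (refl_origin (cos al) (sin al))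
                          (fun q => Om (frame_map c (PI / 6 - th) 1 q))).
  { intros al th' -> Hs. exact (symmetric_wrt_conj _ _ _ _ (frame_map_refl c _ al) Hs). }
  destruct cos_sin_5PI3 as [C5 S5].
  split; [|split].
  - rewrite <- cos_PI, <- sin_PI. apply (axis PI (th + PI / 3)); [field | exact H2].
  - rewrite <- cos_PI3, <- sin_PI3. apply (axis (PI / 3) th); [field | exact H1].
  - rewrite <- C5, <- S5. apply (axis (5 * PI / 3) (th + 2 * PI / 3)); [field | exact H3].
Qed.

Lemma image_inverse g F S :
  (forall q, g (F q) = q) -> (forall p, F (g p) = p) -> image g S = (fun q => S (F q)).
Proof.
  intros Hgl Hgr. apply functional_extensionality. intro q.
  apply propositional_extensionality. split.
  - intros [p [Hp ->]]. rewrite Hgr. exact Hp.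
  - intro Hq. exists (F q). auto.
Qed.

Lemma frame_rescale_similarity c phi e k d : e * e = 1 -> 0 < k ->
  exists g, similarity g /\
    (forall q, g (frame_map c phi e (rescale k d q)) = q) /\
    (forall p, frame_map c phi e (rescale k d (g p)) = p).
Proof.
  intros He Hk. pose proof (cos_sin_sqr phi).
  assert (Hinv : k * / k = 1) by (field; lra).
  set (h := fun p : pt => (fst c + / k * (fst p - fst c), snd c + / k * (snd p - snd c))).
  set (f := fun p : pt => (cos phi * (fst p - fst c) - sin phi * (snd p - snd c),
                           d + e * (sin phi * (fst p - fst c) + cos phi * (snd p - snd c)))).
  exists (fun p => f (h p)). split; [|split].
  - exists f, h. split; [|split].
    + intros p q. unfold dist, f; cbn [fst snd]. f_equal.
      transitivity ((cos phi * cos phi + sin phi * sin phi)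
                      * ((fst p - fst q) ^ 2 + (snd p - snd q) ^ 2)
                    + (e * e - 1) * (sin phi * (fst p - fst q) + cos phi * (snd p - snd q)) ^ 2);
        [ring | rewrite He, cos_sin_sqr; ring].
    + exists c, (/ k). split; [apply Rinv_neq_0_compat; lra | reflexivity].
    + reflexivity.
  - intros [x y]. unfold f, h, frame_map, rescale; cbn [fst snd]. f_equal.
    + transitivity (k * / k * (cos phi * cos phi + sin phi * sin phi) * x); [ring|].
      rewrite Hinv, cos_sin_sqr. ring.
    + transitivity (d + k * / k * (e * e) * (cos phi * cos phi + sin phi * sin phi) * (y - d));
        [ring|].
      rewrite Hinv, He, cos_sin_sqr. ring.
  - intros [x y]. unfold f, h, frame_map, rescale; cbn [fst snd].
    set (u := x - fst c). set (v := y - snd c). f_equal.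
    + transitivity (fst c + k * / k * ((cos phi * cos phi + sin phi * sin phi) * u
                      + (e * e - 1) * sin phi * (sin phi * u + cos phi * v))); [ring|].
      rewrite Hinv, He, cos_sin_sqr. unfold u. ring.
    + transitivity (snd c + k * / k * ((cos phi * cos phi + sin phi * sin phi) * v
                      + (e * e - 1) * cos phi * (sin phi * u + cos phi * v))); [ring|].
      rewrite Hinv, He, cos_sin_sqr. unfold v. ring.
Qed.

Lemma standard_frame_exists Om :
  bounded_set Om -> nonempty_interior Om -> triangle_symmetric Om ->
  exists c phi e m M, e * e = 1 /\
    std_symmetric (fun q => Om (frame_map c phi e q)) /\
    y_extent (fun q => Om (frame_map c phi e q)) m M /\ m < M /\ - m <= M.
Proof.
  intros Hbd Hint Hsym.
  destruct (triangle_symmetric_frame Om Hsym) as (c & phi & Hstd).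
  destruct (y_extent_exists (fun q => Om (frame_map c phi 1 q))) as (m & M & HmM & Hext).
  { apply (bounded_preimage Om (frame_map c phi 1)); [apply frame_map_isometry; ring | exact Hbd]. }
  { apply (interior_preimage Om (frame_map c phi 1));
      [apply frame_map_isometry; ring | apply frame_map_surjective; ring | exact Hint]. }
  exists c, phi. destruct (Rle_dec (- m) M).
  - exists 1, m, M. split; [ring|]. auto.
  - exists (-1), (- M), (- m). split; [ring|].
    assert (E : (fun q => Om (frame_map c phi (-1) q)) = (fun q => Om (frame_map c phi 1 (flip_y q))))
      by (apply functional_extensionality; intro q; now rewrite frame_map_flip).
    rewrite E. split; [exact (std_symmetric_flip _ Hstd)|].
    split; [exact (y_extent_flip _ _ _ Hext)|]. lra.
Qed.

Theorem mainTheorem14 (Om : pt -> Prop) :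
  bounded_set Om -> convex_set Om -> nonempty_interior Om ->
  triangle_symmetric Om ->
  exists (a : R) (g : pt -> pt),
    0 <= a <= 1/3 /\ similarity g /\ class_C a (image g Om).
Proof.
  intros Hbd Hcv Hint Hsym.
  destruct (standard_frame_exists Om Hbd Hint Hsym)
    as (c & phi & e & m & M & He & Hstd & Hext & HmM & Hle).
  assert (Hconv : convex_set (fun q => Om (frame_map c phi e q)))
    by (apply (convex_preimage Om (frame_map c phi e)); [apply frame_map_lerp | exact Hcv]).
  destruct (std_position_class_C _ m M Hconv Hstd Hext HmM Hle) as (a & mu & Hmu & Ha & HC).
  destruct (frame_rescale_similarity c phi e mu (sqrt 3 / 6) He Hmu) as (g & Hg & Hgl & Hgr).
  exists a, g. split; [exact Ha|]. split; [exact Hg|].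
  rewrite (image_inverse _ _ Om Hgl Hgr). exact HC.
Qed.
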